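(* Let $K$ be the $n\times n$ pinned Laplacian of a digraph, with eigenvalues $\lambda_{K,i}=m_ie^{j\phi_i}$, $1\le i\le n$, satisfying $0<\underline m\le m_i\le\overline m$ and $|\phi_i|\le\overline\phi<\pi/2$. Let $\beta>0$ satisfy $\beta>\max_i 1/\mathrm{Re}\{\lambda_{K,i}\}$ and $\beta\underline m\cos\overline\phi>1$, and define $$\overline\rho=\sqrt{(\beta\overline m\sin\overline\phi)^2+(\beta\overline m\cos\overline\phi-1)^2},\qquad \overline\psi=\tan^{-1}\!\left(\frac{\beta\underline m\sin\overline\phi}{\beta\underline m\cos\overline\phi-1}\right).$$ Let $\alpha\in\mathbb{R}$ and $\tau>0$. If $$\frac{\overline\rho+1}{\overline\rho\cos\overline\psi+1}-1<\alpha\tau,$$ then for every eigenvalue $\lambda_{K,i}$ of $K$, $$|\beta\lambda_{K,i}-1|-\big(\beta\,\mathrm{Re}\{\lambda_{K,i}\}-1\big)<\alpha\tau\,\mathrm{Re}\{\beta\lambda_{K,i}\}.$$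
   Context: The pinned Laplacian $K$ is obtained from a weighted digraph Laplacian $L$ (entries $l_{ik}=-w_{ik}$ for neighbors $k$ of $i$, $l_{ii}=\sum_m w_{im}$, else $0$, $w_{ik}>0$ for neighbors) on nodes $\{1,\dots,n+1\}$ by deleting the row and column of the source node $n+1$. Its eigenvalues have positive real parts. The concluded inequality is the sufficient condition for exponential stability of the delay system $\dot Z(t)=AZ(t)+A_dZ(t-\tau)$, $A=-\alpha\beta K+\frac1\tau[I-\beta K]$, $A_d=-\frac1\tau[I-\beta K]$. *)

From HB Require Import structures.
From mathcomp Require Import all_boot all_order all_algebra.
From mathcomp Require Import all_classical all_reals all_analysis.
From mathcomp Require Import complex.
Set Implicit Arguments. Unset Strict Implicit. Unset Printing Implicit Defensive.
Import Order.TTheory GRing.Theory Num.Theory.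
Local Open Scope ring_scope.

(* Weighted digraph Laplacian on nodes 'I_(n.+1) (node ord_max = source n+1).
   w i k is the weight of the edge from i to k; w i k > 0 iff k is a neighbor
   of i, w i k = 0 otherwise. *)
Definition is_weight (R : realType) (n : nat) (w : 'M[R]_n.+1) : Prop :=
  forall i k, 0 <= w i k.

Definition laplacian (R : realType) (n : nat) (w : 'M[R]_n.+1) : 'M[R]_n.+1 :=
  \matrix_(i, k) (if i == k then \sum_(m < n.+1 | m != i) w i m else - w i k).

(* pinned Laplacian: delete row and column of the source node ord_max *)
Definition pinned_laplacian (R : realType) (n : nat) (w : 'M[R]_n.+1) : 'M[R]_n :=
  \matrix_(i, k) laplacian w (widen_ord (leqnSn n) i) (widen_ord (leqnSn n) k).

Definition eigenvalueC (R : realType) (n : nat) (A : 'M[R]_n) (lam : R[i]) : bool :=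
  eigenvalue (map_mx (fun x => x%:C%C) A) lam.

From HB Require Import structures.
From mathcomp Require Import all_boot all_order all_algebra.
From mathcomp Require Import all_classical all_reals all_analysis.
From mathcomp Require Import complex.
From mathcomp Require Import ring lra.
Import Order.TTheory GRing.Theory Num.Theory.
Local Open Scope ring_scope.

(* Write [beta lam - 1 = A e^{i phi} - 1] with [A = beta m] and let [rho] be its
   modulus and [x] its real part.  Since [|A e^{i phi} - 1|^2 = A^2 - 2 A cos phi + 1],
   [rho] is largest for [A = beta mbar] and [|phi| = phibar], so [rho <= rhobar];
   the slope [|Im| / x] is largest for [A = beta mlow] and [|phi| = phibar], so the
   point lies in the sector of half-angle [psibar] and [rho cos psibar <= x].
   As [r |-> (r + 1) / (r cos psibar + 1)] is nondecreasing,
   [(rho + 1) / (x + 1) <= (rhobar + 1) / (rhobar cos psibar + 1) < 1 + alpha tau],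
   which is the claim [rho - x < alpha tau (x + 1)].  Only the polar bounds on the
   eigenvalues enter the argument. *)

Section Trigonometry.
Context {R : realType}.

Lemma cos_le_cos_norm (phi phibar : R) :
  `|phi| <= phibar -> phibar <= pi -> cos phibar <= cos phi.
Proof.
move=> phi_le phibar_le; rewrite -(cos_norm phi).
move: phi_le; rewrite le_eqVlt => /predU1P[-> //|phi_lt].
have phi_ge0 := normr_ge0 phi.
apply/ltW; rewrite ltr_cos // !in_itv /= ?phibar_le ?phi_ge0 ?andbT //.
- exact: le_trans (ltW phi_lt) phibar_le.
- exact: le_trans phi_ge0 (ltW phi_lt).
Qed.

Lemma sin_sqr_le (phi phibar : R) :
  0 <= cos phibar -> cos phibar <= cos phi -> sin phi ^+ 2 <= sin phibar ^+ 2.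
Proof. by rewrite !sin2cos2 lerD2l lerN2 => ? ?; nra. Qed.

Lemma sqrt_mul_cos_atan_le (x y t : R) :
  0 <= x -> y ^+ 2 <= (x * t) ^+ 2 -> Num.sqrt (x ^+ 2 + y ^+ 2) * cos (atan t) <= x.
Proof.
move=> x_ge0 y_le; have D_gt0 : 0 < Num.sqrt (1 + t ^+ 2).
  by rewrite sqrtr_gt0 ltr_wpDr ?sqr_ge0.
rewrite cos_atan ler_pdivrMr // -[x in x * _]ger0_norm // -sqrtr_sqr -sqrtrM ?sqr_ge0 //.
by rewrite ler_sqrt ?mulr_ge0 ?addr_ge0 ?sqr_ge0 // mulrDr mulr1 lerD2l -exprMn.
Qed.

End Trigonometry.

Section PolarGeometry.
Context {R : realFieldType}.

Lemma sqr_polar_sub1 (A c s : R) :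
  c ^+ 2 + s ^+ 2 = 1 -> (A * c - 1) ^+ 2 + (A * s) ^+ 2 = A ^+ 2 - 2 * A * c + 1.
Proof.
move=> cs1; have -> : (A * c - 1) ^+ 2 + (A * s) ^+ 2
  = A ^+ 2 * (c ^+ 2 + s ^+ 2) - 2 * A * c + 1 by ring.
by rewrite cs1 mulr1.
Qed.

Lemma sqr_polar_sub1_le (A B c s C S : R) :
  0 <= A -> A <= B -> C <= A -> C <= c ->
  c ^+ 2 + s ^+ 2 = 1 -> C ^+ 2 + S ^+ 2 = 1 ->
  (A * c - 1) ^+ 2 + (A * s) ^+ 2 <= (B * C - 1) ^+ 2 + (B * S) ^+ 2.
Proof.
move=> A_ge0 A_le_B C_le_A C_le_c cs1 CS1; rewrite !sqr_polar_sub1 //.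
have grow : 0 <= (B - A) * (B + A - 2 * C) by apply: mulr_ge0; lra.
have turn : 0 <= A * (c - C) by apply: mulr_ge0; lra.
nra.
Qed.

(* The slope of [A e^{i phi} - 1] is at most that of [a e^{i phibar} - 1]:
   shrinking the modulus to [a] and widening the angle to [phibar] only
   steepens it. *)
Lemma sqr_im_le_tan (a A C S c s : R) :
  0 < a -> a <= A -> 1 < a * C -> C <= c -> 0 <= S -> s ^+ 2 <= S ^+ 2 ->
  (A * s) ^+ 2 <= ((A * c - 1) * (a * S / (a * C - 1))) ^+ 2.
Proof.
move=> a_gt0 a_le_A aC_gt1 C_le_c S_ge0 s_le_S.
have den_gt0 : 0 < a * C - 1 by lra.
have shrink_ge0 : 0 <= A * (a * C - 1) by nra.
have shrink_le : A * (a * C - 1) <= a * (A * c - 1).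
  have : 0 <= a * A * (c - C) by rewrite mulr_ge0 ?subr_ge0 ?mulr_ge0 //; lra.
  lra.
rewrite mulrA expr_div_n ler_pdivlMr ?exprn_gt0 //.
apply: (@le_trans _ _ ((A * S) ^+ 2 * (a * C - 1) ^+ 2)).
  by rewrite ler_wpM2r ?sqr_ge0 // !exprMn ler_wpM2l ?sqr_ge0.
have -> : (A * S) ^+ 2 * (a * C - 1) ^+ 2 = (A * (a * C - 1)) ^+ 2 * S ^+ 2 by ring.
have -> : ((A * c - 1) * (a * S)) ^+ 2 = (a * (A * c - 1)) ^+ 2 * S ^+ 2 by ring.
by rewrite ler_wpM2r ?sqr_ge0 // ler_pXn2r ?nnegrE //; lra.
Qed.

Lemma ler_ratio_affine (k r r' : R) :
  0 <= k <= 1 -> 0 <= r <= r' -> (r + 1) / (r * k + 1) <= (r' + 1) / (r' * k + 1).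
Proof.
move=> /andP[k_ge0 k_le1] /andP[r_ge0 r_le].
have den_gt0 (u : R) : 0 <= u -> 0 < u * k + 1.
  by move=> u_ge0; apply: ltr_wpDl; rewrite ?mulr_ge0.
rewrite ler_pdivrMr ?den_gt0 // mulrAC ler_pdivlMr ?den_gt0 //; last lra.
have -> : (r' + 1) * (r * k + 1) = (r + 1) * (r' * k + 1) + (r' - r) * (1 - k) by ring.
by rewrite lerDl mulr_ge0 ?subr_ge0.
Qed.

Lemma sub_lt_of_ratio_lt (k r rbar x q : R) :
  0 <= k <= 1 -> 0 <= r <= rbar -> r * k <= x ->
  (rbar + 1) / (rbar * k + 1) - 1 < q -> r - x < q * (x + 1).
Proof.
move=> k01 r_bnd rk_le ratio_lt.
have /andP[k_ge0 _] := k01; have /andP[r_ge0 _] := r_bnd.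
have rk_ge0 : 0 <= r * k := mulr_ge0 r_ge0 k_ge0.
have x1_gt0 : 0 < x + 1 by lra.
have le_ratio : r + 1 <= (r + 1) / (r * k + 1) * (x + 1).
  by rewrite mulrAC ler_pdivlMr; [apply: ler_wpM2l|]; lra.
have ratio_le : (r + 1) / (r * k + 1) * (x + 1) <= (rbar + 1) / (rbar * k + 1) * (x + 1).
  by rewrite ler_wpM2r ?ler_ratio_affine //; lra.
have : (rbar + 1) / (rbar * k + 1) * (x + 1) < (q + 1) * (x + 1).
  by rewrite ltr_pM2r //; lra.
lra.
Qed.

End PolarGeometry.

Section EigenvalueSector.
Context {R : realType} {a A B phi phibar : R}.
Hypotheses (a_gt0 : 0 < a) (a_le_A : a <= A) (A_le_B : A <= B).
Hypotheses (phi_le : `|phi| <= phibar) (phibar_lt : phibar < pi / 2).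
Hypothesis aC_gt1 : 1 < a * cos phibar.

Let phibar_ge0 : 0 <= phibar. Proof. exact: le_trans (normr_ge0 phi) phi_le. Qed.
Let phibar_le_pi : phibar <= pi.
Proof. by move: phibar_lt; have := pi_gt0 R; lra. Qed.
Let C_gt0 : 0 < cos phibar.
Proof.
apply: cos_gt0_pihalf; rewrite phibar_lt andbT.
by have := pi_gt0 R; have := phibar_ge0; lra.
Qed.
Let C_le_c : cos phibar <= cos phi. Proof. exact: cos_le_cos_norm. Qed.
Let A_ge0 : 0 <= A. Proof. exact: le_trans (ltW a_gt0) a_le_A. Qed.

Lemma polar_sub1_re_ge0 : 0 <= A * cos phi - 1.
Proof. by rewrite subr_ge0 (le_trans (ltW aC_gt1)) // ler_pM // ltW. Qed.

Lemma norm_polar_sub1_le :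
  Num.sqrt ((A * cos phi - 1) ^+ 2 + (A * sin phi) ^+ 2)
  <= Num.sqrt ((B * sin phibar) ^+ 2 + (B * cos phibar - 1) ^+ 2).
Proof.
have aC_le_A : a * cos phibar <= A := le_trans (ler_piMr (ltW a_gt0) (cos_le1 _)) a_le_A.
have C_le_A : cos phibar <= A := le_trans (cos_le1 _) (le_trans (ltW aC_gt1) aC_le_A).
rewrite ler_sqrt ?addr_ge0 ?sqr_ge0 // [X in _ <= X]addrC.
by apply: sqr_polar_sub1_le; rewrite ?cos2Dsin2.
Qed.

Lemma norm_polar_sub1_cos_le :
  Num.sqrt ((A * cos phi - 1) ^+ 2 + (A * sin phi) ^+ 2)
    * cos (atan (a * sin phibar / (a * cos phibar - 1)))
  <= A * cos phi - 1.
Proof.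
apply: sqrt_mul_cos_atan_le; first exact: polar_sub1_re_ge0.
apply: sqr_im_le_tan => //; last exact: sin_sqr_le (ltW C_gt0) C_le_c.
by apply: sin_ge0_pi; rewrite phibar_ge0 phibar_le_pi.
Qed.

End EigenvalueSector.

Theorem corollary1 (R : realType) (n : nat) (w : 'M[R]_n.+1)
  (mlow mbar phibar beta alpha tau : R) :
  is_weight w ->
  let K := pinned_laplacian w in
  (* polar form of the eigenvalues: lambda = m e^{j phi} *)
  (forall lam : R[i], eigenvalueC K lam ->
     exists m phi : R, lam = ((m * cos phi) +i* (m * sin phi))%C /\
       mlow <= m /\ m <= mbar /\ `|phi| <= phibar) ->
  0 < mlow ->
  phibar < pi / 2 ->
  0 < beta ->
  (forall lam : R[i], eigenvalueC K lam -> 1 / complex.Re lam < beta) ->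
  1 < beta * mlow * cos phibar ->
  0 < tau ->
  let rhobar := Num.sqrt ((beta * mbar * sin phibar) ^+ 2
                          + (beta * mbar * cos phibar - 1) ^+ 2) in
  let psibar := atan ((beta * mlow * sin phibar) / (beta * mlow * cos phibar - 1)) in
  (rhobar + 1) / (rhobar * cos psibar + 1) - 1 < alpha * tau ->
  forall lam : R[i], eigenvalueC K lam ->
    (`|beta%:C%C * lam - 1| - (beta * complex.Re lam - 1)%:C%C
       < (alpha * tau * complex.Re (beta%:C%C * lam))%:C%C)%R.
Proof.
move=> _ K polar mlow_gt0 phibar_lt beta_gt0 _ aC_gt1 _ rhobar psibar ratio_lt.
move=> lam /polar[m [phi [-> [mlow_le [m_le phi_le]]]]].
rewrite normc_def ltcE /= subr0 eqxx !mul0r !subr0 addr0 /= !(mulrA beta m).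
have a_gt0 : 0 < beta * mlow by rewrite mulr_gt0.
have a_le_A : beta * mlow <= beta * m by rewrite ler_pM2l.
have A_le_B : beta * m <= beta * mbar by rewrite ler_pM2l.
have k01 : 0 <= cos psibar <= 1 by rewrite cos_le1 cos_atan invr_ge0 sqrtr_ge0.
have r_bnd : 0 <= Num.sqrt ((beta * m * cos phi - 1) ^+ 2 + (beta * m * sin phi) ^+ 2) <= rhobar.
  by rewrite sqrtr_ge0 (norm_polar_sub1_le a_gt0 a_le_A A_le_B phi_le phibar_lt aC_gt1).
have := sub_lt_of_ratio_lt _ _ _ _ (alpha * tau) k01 r_bnd
  (norm_polar_sub1_cos_le a_gt0 a_le_A phi_le phibar_lt aC_gt1) ratio_lt.
by rewrite subrK.
Qed.
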